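(* Let $G$ be a Hausdorff topological group, $Y$ a topological space, $\theta$ a nice partial action of $G$ on $Y$, and $X$ a compact space, with $\hat\theta$ the induced partial action on $C(X,Y)$. Then the enveloping space $C(X,Y)_G$ is homeomorphic to an open subset of $C(X,Y_G)$ (compact-open topology), where $Y_G$ is the enveloping space of $\theta$.
   Context: A topological partial action of $G$ on $Y$ is a family of homeomorphisms $\theta_g\colon Y_{g^{-1}}\to Y_g$ between open subsets with $Y_e=Y$, $\theta_e=\mathrm{id}_Y$, $\theta_{g^{-1}}=\theta_g^{-1}$, $\theta_g\circ\theta_h$ a restriction of $\theta_{gh}$; it is nice if $G*Y=\{(g,y): y\in Y_{g^{-1}}\}$ is open in $G\times Y$ and $(g,y)\mapsto\theta_g(y)$ is continuous on $G*Y$. $C(X,Y)$ has the compact-open topology; $\hat\theta$ has $C(X,Y)_g=\{f: f(X)\subset Y_g\}$ and $\hat\theta_g(f)=\theta_g\circ f$. For a topological partial action on $W$, the enveloping space is $W_G=(G\times W)/R$ with the quotient topology, where $(g,x)R(h,y)$ iff $x\in W_{g^{-1}h}$ and $\theta_{h^{-1}g}(x)=y$. *)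

From HB Require Import structures.
From mathcomp Require Import all_boot all_order all_algebra generic_quotient.
From mathcomp Require Import all_classical all_reals all_analysis.
From Stdlib Require Import Relations.Relation_Operators.

Set Implicit Arguments.
Unset Strict Implicit.
Unset Printing Implicit Defensive.

Local Open Scope classical_set_scope.

Definition topological_group (G : topologicalType)
    (mul : G -> G -> G) (inv : G -> G) (one : G) : Prop :=
  [/\ (forall a b c, mul a (mul b c) = mul (mul a b) c),
      (forall a, mul one a = a /\ mul a one = a),
      (forall a, mul (inv a) a = one /\ mul a (inv a) = one),
      continuous (fun p : G * G => mul p.1 p.2) &
      continuous inv].

(* by the family of domains  D g = Y_g  and maps  th g : Y -> Y  whose *)
(* restriction to Y_{g^-1} is theta_g : Y_{g^-1} -> Y_g (the values   *)
(* of  th g  outside Y_{g^-1} are irrelevant).                         *)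

Definition topological_partial_action (G Y : topologicalType)
    (mul : G -> G -> G) (inv : G -> G) (one : G)
    (D : G -> set Y) (th : G -> Y -> Y) : Prop :=
  (forall g, open (D g)) /\
  [/\
      (forall g y, D (inv g) y -> D g (th g y)),
      (forall g, {within D (inv g), continuous (th g)}),
      (* theta_{g^-1} = theta_g^-1  (so each theta_g is a homeomorphism
         Y_{g^-1} -> Y_g, with inverse theta_{g^-1}) *)
      (forall g y, D (inv g) y -> th (inv g) (th g y) = y),
      D one = setT /\ (forall y, th one y = y) &
      (forall g h y, D (inv h) y -> D (inv g) (th h y) ->
         D (inv (mul g h)) y /\ th (mul g h) y = th g (th h y))].

Definition nice_partial_action (G Y : topologicalType)
    (mul : G -> G -> G) (inv : G -> G) (one : G)
    (D : G -> set Y) (th : G -> Y -> Y) : Prop :=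
  [/\ topological_partial_action mul inv one D th,
      open [set p : G * Y | D (inv p.1) p.2] &
      {within [set p : G * Y | D (inv p.1) p.2],
         continuous (fun p : G * Y => th p.1 p.2)}].

(* The action is passed through its graph  act k x y  <->             *)
(* "theta_k(x) = y", which allows treating the induced action on       *)
(* C(X,Y) without building hat-theta as a function.                   *)

Definition env_R (G Z : Type) (mul : G -> G -> G) (inv : G -> G)
    (D : G -> set Z) (act : G -> Z -> Z -> Prop) (p q : G * Z) : Prop :=
  D (mul (inv p.1) q.1) p.2 /\ act (mul (inv q.1) p.1) p.2 q.2.

(* Its equivalence closure (equal to R itself for a partial action),
   as a boolean equivalence relation usable for quotients. *)
Definition env_eq (T : Type) (R : T -> T -> Prop) : rel T :=
  fun p q => `[< clos_refl_sym_trans T R p q >].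

Lemma env_eq_is_equiv (T : Type) (R : T -> T -> Prop) :
  equiv_class_of (env_eq R).
Proof.
split.
- by move=> x; apply/asboolP; apply: rst_refl.
- move=> x y; apply/idP/idP => /asboolP H; apply/asboolP; exact: rst_sym.
- move=> y x z /asboolP H1 /asboolP H2; apply/asboolP; exact: rst_trans H1 H2.
Qed.

Definition env_equiv (T : Type) (R : T -> T -> Prop) : equiv_rel T :=
  EquivRelPack (env_eq_is_equiv R).

Definition enveloping_space (G Z : topologicalType)
    (mul : G -> G -> G) (inv : G -> G)
    (D : G -> set Z) (act : G -> Z -> Z -> Prop) : topologicalType :=
  quotient_topology {eq_quot (env_equiv (env_R mul inv D act))}%qT.

Definition env_space (G Y : topologicalType)
    (mul : G -> G -> G) (inv : G -> G)
    (D : G -> set Y) (th : G -> Y -> Y) : topologicalType :=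
  enveloping_space mul inv D (fun k y y' => th k y = y').

Definition Cmap (X Y : topologicalType) : topologicalType :=
  set_type [set f : {compact-open, X -> Y} | continuous (f : X -> Y)].

Definition Cfun (X Y : topologicalType) (f : Cmap X Y) : X -> Y :=
  set_val f.

Definition hat_dom {G Y : topologicalType} (X : topologicalType) (D : G -> set Y) (g : G) :
    set (Cmap X Y) :=
  [set f | forall x, D g (Cfun f x)].

Definition hat_act {G Y : topologicalType} (X : topologicalType) (th : G -> Y -> Y) (g : G)
    (f f' : Cmap X Y) : Prop :=
  th g \o Cfun f = Cfun f'.

Arguments hat_dom {G Y} X D g.
Arguments hat_act {G Y} X th g f f'.

Definition hat_env_space {G Y : topologicalType} (X : topologicalType)
    (mul : G -> G -> G) (inv : G -> G)
    (D : G -> set Y) (th : G -> Y -> Y) : topologicalType :=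
  enveloping_space mul inv (hat_dom X D) (hat_act X th).

Arguments hat_env_space {G Y} X mul inv D th.

(* The enveloping relation of a partial action is already an equivalence
   relation, so [g, y] = [h, z] in Y_G exactly when y lies in Y_{g^-1 h} and
   theta_{h^-1 g} y = z.  Hence [g, f] |-> (x |-> [g, f x]) is well defined and
   injective on C(X,Y)_G; it is continuous by the tube lemma.  Since the action
   is nice, each j_g : y |-> [g, y] is an open embedding of Y into Y_G.  Near a
   map x |-> [g, f x], every F : X -> Y_G takes values in the open set j_g(Y)
   (X being compact), so F is the image of [g, j_g^-1 o F], and j_g^-1 o F
   depends continuously on F: the map is open. *)

From HB Require Import structures.
From mathcomp Require Import all_boot all_order all_algebra generic_quotient.
From mathcomp Require Import all_classical all_reals all_analysis.
From Stdlib Require Import Relations.Relation_Operators.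

Set Implicit Arguments.
Unset Strict Implicit.
Unset Printing Implicit Defensive.

Local Open Scope classical_set_scope.
Local Open Scope quotient_scope.

Lemma pair_cst_continuous (A B : topologicalType) (a : A) :
  continuous (fun b : B => (a, b)).
Proof. by move=> b; apply: cvg_pair; [exact: cvg_cst | exact: cvg_id]. Qed.

Lemma continuousT_comp (R S T : topologicalType) (f : R -> S) (g : S -> T) :
  continuous f -> continuous g -> continuous (g \o f).
Proof. by move=> cf cg x; apply: continuous_comp; [exact: cf | exact: cg]. Qed.

Section TopologicalGroup.
Variables (G : topologicalType) (mul : G -> G -> G) (inv : G -> G) (one : G).
Hypothesis hG : topological_group mul inv one.

Lemma tgroup_invK : involutive inv.
Proof.
move=> a; have [mulA mul1 mulV _ _] := hG.
rewrite -[inv (inv a)](mul1 _).2 -(mulV a).1 mulA.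
by rewrite (mulV (inv a)).1 (mul1 _).1.
Qed.

Lemma tgroup_invM a b : inv (mul a b) = mul (inv b) (inv a).
Proof.
have [mulA mul1 mulV _ _] := hG.
have h : mul (mul (inv b) (inv a)) (mul a b) = one.
  by rewrite mulA -(mulA _ (inv a)) (mulV a).1 (mul1 _).2 (mulV b).1.
by rewrite -[LHS](mul1 _).1 -h -mulA (mulV _).2 (mul1 _).2.
Qed.

Lemma tgroup_lmul_continuous a : continuous (mul a).
Proof.
have [_ _ _ mul_cont _] := hG.
exact: continuousT_comp (@pair_cst_continuous _ G a) mul_cont.
Qed.

End TopologicalGroup.

Lemma tube_lemma (G Y : topologicalType) (C : set Y) (W : set (G * Y)) g0 :
  compact C -> open W -> (forall y, C y -> W (g0, y)) ->
  exists V O, [/\ nbhs g0 V, open O, C `<=` O &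
                  forall g y, V g -> O y -> W (g, y)].
Proof.
move=> cC oW CW.
pose P (V : set G) (y : Y) := \forall y' \near y, forall g, V g -> W (g, y').
have : \forall V \near powerset_filter_from (nbhs g0), C `<=` P V.
  apply: ((compact_near_coveringP C).1 cC _ _ P _) => y Cy.
  have : nbhs (g0, y) W by apply: open_nbhs_nbhs; split => //; exact: CW.
  case=> -[V0 N0] /= [nV0 nN0] sub.
  exists (N0°, [set V | V `<=` V0]); first split.
  - exact: nbhs_interior.
  - exact: small_set_sub.
  case=> y' V /= [hy' hV]; apply: filterS hy' => y'' N0y'' g Vg.
  by apply: sub; split => //; exact: hV.
case/near_powerset_filter_fromP.
  by move=> A B AB CB y Cy; apply: filterS (CB y Cy) => y' H g Ag; apply/H/AB.
move=> V nV CP; exists V, [set y | forall g, V g -> W (g, y)]°; split.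
- exact: nV.
- exact: open_interior.
- by move=> y Cy; have := CP y Cy.
- by move=> g y Vg /interior_subset; apply.
Qed.

Section ContinuousMaps.
Variables X Z : topologicalType.

Lemma Cfun_continuous (f : Cmap X Z) : continuous (Cfun f).
Proof. exact: (set_mem (proj2_sig f)). Qed.

Lemma Cfun_inj : injective (@Cfun X Z).
Proof. by move=> f g; apply: val_inj. Qed.

Definition mkC (F : X -> Z) (cF : continuous F) : Cmap X Z :=
  @exist _ _ (F : {compact-open, X -> Z}) (mem_set cF).

Lemma open_Cmap_into (K : set X) (O : set Z) :
  compact K -> open O -> open [set f : Cmap X Z | Cfun f @` K `<=` O].
Proof.
by move=> cK oO; exists [set F : {compact-open, X -> Z} | F @` K `<=` O];
  first exact: compact_open_open.
Qed.

End ContinuousMaps.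

Section Envelope.
Variables (G Y X : topologicalType) (mul : G -> G -> G) (inv : G -> G).
Variables (one : G) (D : G -> set Y) (th : G -> Y -> Y).
Hypotheses (hG : topological_group mul inv one)
  (hP : topological_partial_action mul inv one D th)
  (hdom : open [set p : G * Y | D (inv p.1) p.2])
  (hcont : {within [set p : G * Y | D (inv p.1) p.2],
              continuous (fun p : G * Y => th p.1 p.2)}).
Hypothesis cX : compact [set: X].

Local Notation YG := (env_space mul inv D th).
Local Notation R := (env_R mul inv D (fun k y y' => th k y = y')).

Lemma env_eq_R p q : env_eq R p q -> R p q.
Proof.
have [_ [thD _ thK [D1 th1] thM]] := hP; have [mulA mul1 mulV _ _] := hG.
have invK := tgroup_invK hG; have invM := tgroup_invM hG.
move=> /asboolP; elim=> {p q} //.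
- by move=> [g y]; rewrite /env_R /= (mulV g).1 D1.
- move=> [g y] [h z] _ [/= Dy <-]; rewrite /env_R /=.
  have Dy' : D (inv (mul (inv h) g)) y by rewrite invM invK.
  by split; [exact: thD | rewrite -[mul (inv g) h]invK invM invK thK].
- move=> [g y] [h z] [k w] _ [/= Dy <-] _ [/= Dz <-]; rewrite /env_R /=.
  have Dy' : D (inv (mul (inv h) g)) y by rewrite invM invK.
  have Dz' : D (inv (mul (inv k) h)) (th (mul (inv h) g) y).
    by rewrite invM invK.
  have [Dky thky] := thM _ _ _ Dy' Dz'.
  have e : mul (mul (inv k) h) (mul (inv h) g) = mul (inv k) g.
    by rewrite mulA -(mulA _ h) (mulV h).2 (mul1 _).2.
  by rewrite e invM invK in Dky; rewrite -thky e.
Qed.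

Lemma env_piP p q : \pi_YG p = \pi_YG q <-> R p q.
Proof.
split=> [/eqmodP/env_eq_R// | Rpq]; apply/eqmodP/asboolP.
exact: rst_step.
Qed.

Definition env_emb (g : G) (y : Y) : YG := \pi_YG (g, y).

Lemma env_emb_continuous g : continuous (env_emb g).
Proof.
exact: continuousT_comp (@pair_cst_continuous _ Y g) pi_continuous.
Qed.

Lemma env_emb_inj g : injective (env_emb g).
Proof.
have [_ [_ _ _ [_ th1] _]] := hP; have [_ _ mulV _ _] := hG.
by move=> y y' /env_piP[_ /=]; rewrite (mulV g).1 th1.
Qed.

Definition env_emb_inv (g : G) (d : Y) (z : YG) : Y :=
  if pselect (range (env_emb g) z) is left e then sval (cid2 e) else d.

Lemma env_emb_invP g d z :
  range (env_emb g) z -> env_emb g (env_emb_inv g d z) = z.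
Proof. by rewrite /env_emb_inv; case: pselect => // e _; case: cid2. Qed.

Lemma env_emb_invK g d : cancel (env_emb g) (env_emb_inv g d).
Proof.
by move=> y; apply: (@env_emb_inj g); rewrite env_emb_invP //; exists y.
Qed.

Lemma env_emb_open g U : open U -> open (env_emb g @` U).
Proof.
move=> oU; have invK := tgroup_invK hG; have invM := tgroup_invM hG.
pose S := [set p : G * Y | D (inv p.1) p.2] `&` (fun p => th p.1 p.2) @^-1` U.
have oS : open S.
  by move: hcont; rewrite continuous_open_subspace // => /continuous_inP; apply.
suff : open (\pi_YG @^-1` (env_emb g @` U)) by [].
have -> : \pi_YG @^-1` (env_emb g @` U) =
    (fun p : G * Y => (mul (inv g) p.1, p.2)) @^-1` S.
  rewrite eqEsubset; split => -[h y] /=.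
  - case=> u Uu /esym /env_piP [/= Dy thy].
    by split; [rewrite /= invM invK | rewrite /= thy].
  - case=> /= Dy Uy; exists (th (mul (inv g) h) y) => //.
    by apply/esym/env_piP; split; rewrite //= -[mul (inv h) g]invK invM invK.
apply: (continuousP _).1 oS => p; apply: cvg_pair; last exact: cvg_snd.
have lmul := tgroup_lmul_continuous hG (a := inv g).
have H := continuous_comp (@cvg_fst _ _ (nbhs p.1) (nbhs p.2) _) (lmul p.1).
exact: H.
Qed.

Local Notation XG := (hat_env_space X mul inv D th).
Local Notation Rh := (env_R mul inv (hat_dom X D) (hat_act X th)).

Definition pointwise_cls (p : G * Cmap X Y) : Cmap X YG :=
  mkC (continuousT_comp (Cfun_continuous (f := p.2))
                        (env_emb_continuous (g := p.1))).

Lemma pointwise_clsE p x : Cfun (pointwise_cls p) x = env_emb p.1 (Cfun p.2 x).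
Proof. by []. Qed.

Lemma pointwise_cls_compat p q :
  env_eq Rh p q -> pointwise_cls p = pointwise_cls q.
Proof.
move/asboolP; elim=> {p q} //.
- move=> [g f] [h f'] [/= Df thf]; apply: Cfun_inj; apply: funext => x.
  rewrite !pointwise_clsE /=; apply/eqmodP/asboolP/rst_step.
  by split; [exact: Df | rewrite -thf].
- by move=> p q r _ -> _ ->.
Qed.

Definition env_to_Cmap (a : XG) : Cmap X YG := pointwise_cls (repr a).

Lemma env_to_Cmap_pi p : env_to_Cmap (\pi_XG p) = pointwise_cls p.
Proof.
by apply: pointwise_cls_compat; apply/(eqmodP (env_equiv Rh)); rewrite reprK.
Qed.

Lemma pointwise_cls_eq p q :
  pointwise_cls p = pointwise_cls q -> \pi_XG p = \pi_XG q.
Proof.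
case: p q => [g f] [h f'] /(congr1 (@Cfun _ _)) E.
have R_at x : R (g, Cfun f x) (h, Cfun f' x).
  by apply/env_piP; exact: (congr1 (fun F => F x) E).
apply/(eqmodP (env_equiv Rh))/asboolP/rst_step; split => /=.
- by move=> x; have [] := R_at x.
- by apply: funext => x; have [] := R_at x.
Qed.

Lemma env_to_Cmap_inj : injective env_to_Cmap.
Proof.
by move=> a b; rewrite -[a]reprK -[b]reprK !env_to_Cmap_pi => /pointwise_cls_eq.
Qed.

Lemma pointwise_cls_continuous : continuous pointwise_cls.
Proof.
apply: (@continuous_comp_initial _ _ _ set_val) => -[g0 f0].
apply/compact_open_cvgP => K O cK oO sub.
have cf0K : compact (Cfun f0 @` K).
  apply: continuous_compact => //; apply: continuous_subspaceT.
  exact: Cfun_continuous.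
have W_f0K y : (Cfun f0 @` K) y -> (\pi_YG @^-1` O) (g0, y).
  by case=> x Kx <-; apply: sub; exists x.
have [V [N [nV oN f0KN VNO]]] := tube_lemma cf0K oO W_f0K.
exists (V, [set f : Cmap X Y | Cfun f @` K `<=` N]).
  split => //; apply: open_nbhs_nbhs; split; first exact: open_Cmap_into.
  exact: subset_trans f0KN.
by case=> g f /= [Vg fKN] _ [x Kx <-]; apply: VNO => //; apply: fKN; exists x.
Qed.

Lemma env_to_Cmap_continuous : continuous env_to_Cmap.
Proof.
apply/quotient_continuous.
have -> : env_to_Cmap \o \pi_XG = pointwise_cls.
  by apply: funext => p; exact: env_to_Cmap_pi.
exact: pointwise_cls_continuous.
Qed.

Definition env_emb_invC (g : G) (d : X -> Y) (F : Cmap X YG) :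
    {compact-open, X -> Y} :=
  fun x => env_emb_inv g (d x) (Cfun F x).

Lemma env_emb_invCK g d F : range (Cfun F) `<=` range (env_emb g) ->
  env_emb g \o env_emb_invC g d F = Cfun F.
Proof.
by move=> FX; apply: funext => x /=; rewrite env_emb_invP //; apply: FX.
Qed.

Lemma env_emb_invC_continuous g d F :
  range (Cfun F) `<=` range (env_emb g) -> continuous (env_emb_invC g d F).
Proof.
move=> FX; apply/continuousP => U oU.
have -> : env_emb_invC g d F @^-1` U = Cfun F @^-1` (env_emb g @` U).
  rewrite -(env_emb_invCK d FX) eqEsubset; split => x /=.
  - by exists (env_emb_invC g d F x).
  - by case=> y Uy /(@env_emb_inj g) <-.
by move: (Cfun_continuous (f := F)) => /continuousP; apply; exact: env_emb_open.
Qed.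

Lemma env_emb_invC_cvg g d F0 : range (Cfun F0) `<=` range (env_emb g) ->
  {for F0, continuous (env_emb_invC g d)}.
Proof.
move=> F0X; apply/(compact_open_cvgP _ (fmap_filter _ (nbhs_filter F0))).
move=> K O cK oO sub.
have oM := open_Cmap_into cK (env_emb_open (g := g) oO).
suff : nbhs F0 [set F | Cfun F @` K `<=` env_emb g @` O].
  apply: filterS => F FK _ [x Kx <-]; rewrite /env_emb_invC /=.
  by have [y Oy <-] := FK _ (imageP _ Kx); rewrite env_emb_invK.
apply: open_nbhs_nbhs; split => // _ [x Kx <-].
exists (env_emb_invC g d F0 x); first by apply: sub; exists x.
by rewrite -(env_emb_invCK d F0X).
Qed.

Lemma env_to_Cmap_open A : open A -> open (env_to_Cmap @` A).
Proof.
move=> oA; rewrite openE => _ [a Aa <-].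
rewrite -[a]reprK in Aa *; case: (repr a) Aa => g f Aa; rewrite env_to_Cmap_pi.
pose F0 := pointwise_cls (g, f).
have F0X : range (Cfun F0) `<=` range (env_emb g).
  by move=> _ [x _ <-]; exists (Cfun f x).
have invF0 : env_emb_invC g (Cfun f) F0 = Cfun f.
  by apply: funext => x; rewrite /env_emb_invC env_emb_invK.
have [B oB eB] : open [set f' : Cmap X Y | A (\pi_XG (g, f'))].
  have cg : continuous (fun f' : Cmap X Y => \pi_XG (g, f')).
    exact: continuousT_comp (@pair_cst_continuous _ (Cmap X Y) g) pi_continuous.
  exact: (proj1 (continuousP _) cg A oA).
have nX : nbhs F0 [set F | range (Cfun F) `<=` range (env_emb g)].
  apply: open_nbhs_nbhs; split => //.
  exact: open_Cmap_into cX (env_emb_open (g := g) openT).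
have nB : nbhs F0 [set F | B (env_emb_invC g (Cfun f) F)].
  apply: (env_emb_invC_cvg (d := Cfun f) F0X); apply: open_nbhs_nbhs.
  by split=> //; rewrite invF0 -[B (Cfun f)]/((set_val @^-1` B) f) eB.
apply: filterS (filterI nX nB) => F [FX BF].
pose f' := mkC (env_emb_invC_continuous (d := Cfun f) FX).
exists (\pi_XG (g, f')).
- by rewrite -[A _]/([set f' | A (\pi_XG (g, f'))] f') -eB.
- by apply: Cfun_inj; rewrite env_to_Cmap_pi; exact: env_emb_invCK.
Qed.

End Envelope.

Theorem theorem3p7 (G Y X : topologicalType)
    (mul : G -> G -> G) (inv : G -> G) (one : G)
    (D : G -> set Y) (th : G -> Y -> Y) :
  topological_group mul inv one ->
  hausdorff_space G ->
  nice_partial_action mul inv one D th ->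
  compact [set: X] ->
  exists phi : hat_env_space X mul inv D th ->
               Cmap X (env_space mul inv D th),
    [/\ injective phi,
        continuous phi,
        open (range phi) &
        (forall A, open A -> open (phi @` A))].
Proof.
move=> hG _ [hP hdom hcont] cX.
exists (@env_to_Cmap G Y X mul inv D th); split.
- exact: env_to_Cmap_inj hG hP.
- exact: env_to_Cmap_continuous.
- exact: (env_to_Cmap_open hG hP hdom hcont cX openT).
- by move=> A oA; exact: (env_to_Cmap_open hG hP hdom hcont cX oA).
Qed.
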